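(* Consider Algorithm SS-SQP (described in the context) under the standing assumptions (A1), (A2). For all $k\in\mathbb{N}$, $$\Delta l(x_k,\bar\tau_k,\bar g_k,\bar d_k)\ge\bar\tau_k\max\{\bar d_k^TH_k\bar d_k,0\}+\sigma\|c_k\|_1.$$ Furthermore, if $\bar\tau_k\ne\bar\tau_{k-1}$, then $0<\bar\tau_k\le(1-\epsilon_\tau)\bar\tau_{k-1}$.
   Context: Problem: $\min_{x\in\mathbb{R}^n}f(x)$ s.t. $c(x)=0$ with $f,c$ continuously differentiable, $c:\mathbb{R}^n\to\mathbb{R}^m$, $m\le n$; $c_k=c(x_k)$, $J_k=\nabla c(x_k)^T$. $\Delta l(x,\tau,g,d)=-\tau g^Td+\|c(x)\|_1$. Standing assumption (A1): there is an open convex set $\mathcal{X}$ containing all iterates and trial iterates; $f$ bounded below, $\nabla f$ $L$-Lipschitz and bounded, $c$ bounded, each $\nabla c_i$ Lipschitz and bounded on $\mathcal{X}$; singular values of $\nabla c(x)^T$ bounded away from zero on $\mathcal{X}$. (A2): $H_k$ symmetric, chosen independently of $\bar g_k$, $\|H_k\|\le\kappa_H$, $u^TH_ku\ge\zeta\|u\|^2$ for $u\in\mathrm{Null}(J_k)$, $\kappa_H,\zeta>0$. Algorithm SS-SQP: inputs $x_0$, $\bar\tau_{-1}>0$, $\alpha_{\max}\in(0,1]$, $\alpha_0\in(0,\alpha_{\max}]$, $\epsilon_f\ge0$, $\gamma,\theta,\sigma,\epsilon_\tau\in(0,1)$. At iteration $k$: random gradient estimate $\bar g_k\in\mathbb{R}^n$;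 solve $\begin{bmatrix}H_k & J_k^T\\ J_k&0\end{bmatrix}\begin{bmatrix}\bar d_k\\ \bar y_k\end{bmatrix}=-\begin{bmatrix}\bar g_k\\ c_k\end{bmatrix}$; $\bar\tau_k^{\rm trial}=\infty$ if $\bar g_k^T\bar d_k+\max\{\bar d_k^TH_k\bar d_k,0\}\le0$, else $(1-\sigma)\|c_k\|_1/(\bar g_k^T\bar d_k+\max\{\bar d_k^TH_k\bar d_k,0\})$; $\bar\tau_k=\bar\tau_{k-1}$ if $\bar\tau_{k-1}\le\bar\tau_k^{\rm trial}$, else $\bar\tau_k=\min\{(1-\epsilon_\tau)\bar\tau_{k-1},\bar\tau_k^{\rm trial}\}$; $x_k^+=x_k+\alpha_k\bar d_k$; with objective estimates $\bar f$ and $\bar\phi(x,\tau;\xi)=\tau\bar f(x;\xi)+\|c(x)\|_1$, set $x_{k+1}=x_k^+$, $\alpha_{k+1}=\min\{\alpha_{\max},\alpha_k/\gamma\}$ if $\bar\phi(x_k^+,\bar\tau_k;\xi_k^+)\le\bar\phi(x_k,\bar\tau_k;\xi_k^0)-\alpha_k\theta\Delta l(x_k,\bar\tau_k,\bar g_k,\bar d_k)+2\bar\tau_k\epsilon_f$, else $x_{k+1}=x_k$, $\alpha_{k+1}=\gamma\alpha_k$. *)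

From mathcomp Require Import all_boot all_order all_algebra.
From mathcomp Require Import reals constructive_ereal.
Import Order.TTheory GRing.Theory Num.Theory.
Set Implicit Arguments.
Unset Strict Implicit.
Unset Printing Implicit Defensive.
Local Open Scope ring_scope.

Section SSSQP.
Variable R : realType.

Definition dotv {n} (u v : 'cV[R]_n) : R := \sum_(i < n) u i 0 * v i 0.
Definition norm2 {n} (v : 'cV[R]_n) : R := Num.sqrt (dotv v v).
Definition norm1 {n} (v : 'cV[R]_n) : R := \sum_(i < n) `|v i 0|.
Definition quad {n} (H : 'M[R]_n) (d : 'cV[R]_n) : R := dotv d (H *m d).

Definition Delta_l {n m} (c : 'cV[R]_n -> 'cV[R]_m) (x : 'cV[R]_n) (tau : R)
  (g d : 'cV[R]_n) : R := - tau * dotv g d + norm1 (c x).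

Definition tau_trial {n m} (sigma : R) (ck : 'cV[R]_m) (g : 'cV[R]_n)
  (H : 'M[R]_n) (d : 'cV[R]_n) : \bar R :=
  let den := dotv g d + Num.max (quad H d) 0 in
  if den <= 0 then +oo%E else ((1 - sigma) * norm1 ck / den)%:E.

Definition tau_next (eps_tau taup : R) (trial : \bar R) : R :=
  if (taup%:E <= trial)%E then taup
  else Num.min ((1 - eps_tau) * taup) (fine trial).

Definition open_set {n} (X : 'cV[R]_n -> Prop) :=
  forall x, X x -> exists2 r : R, 0 < r & forall y, norm2 (y - x) < r -> X y.
Definition convex_set {n} (X : 'cV[R]_n -> Prop) :=
  forall x y (t : R), X x -> X y -> 0 <= t -> t <= 1 -> X ((1 - t) *: x + t *: y).

Definition C1_scalar {n} (f : 'cV[R]_n -> R) (gradf : 'cV[R]_n -> 'cV[R]_n) :=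
  (forall x (e : R), 0 < e -> exists2 del : R, 0 < del & forall h,
     norm2 h < del -> `|f (x + h) - f x - dotv (gradf x) h| <= e * norm2 h) /\
  (forall x (e : R), 0 < e -> exists2 del : R, 0 < del & forall y,
     norm2 (y - x) < del -> norm2 (gradf y - gradf x) < e).

(* gradient of the i-th constraint, from J = grad c ^T *)
Definition grad_ci {n m} (J : 'cV[R]_n -> 'M[R]_(m, n)) (i : 'I_m) (x : 'cV[R]_n)
  : 'cV[R]_n := (row i (J x))^T.

Definition C1_vector {n m} (c : 'cV[R]_n -> 'cV[R]_m) (J : 'cV[R]_n -> 'M[R]_(m, n)) :=
  (forall x (e : R), 0 < e -> exists2 del : R, 0 < del & forall h,
     norm2 h < del -> norm2 (c (x + h) - c x - J x *m h) <= e * norm2 h) /\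
  (forall i x (e : R), 0 < e -> exists2 del : R, 0 < del & forall y,
     norm2 (y - x) < del -> norm2 (grad_ci J i y - grad_ci J i x) < e).

Definition assumption_A1 {n m} (X : 'cV[R]_n -> Prop) (f : 'cV[R]_n -> R)
  (gradf : 'cV[R]_n -> 'cV[R]_n) (c : 'cV[R]_n -> 'cV[R]_m)
  (J : 'cV[R]_n -> 'M[R]_(m, n)) (L : R) :=
  open_set X /\ convex_set X /\
  (exists flow : R, forall x, X x -> flow <= f x) /\
  (0 < L /\ forall x y, X x -> X y -> norm2 (gradf x - gradf y) <= L * norm2 (x - y)) /\
  (exists B : R, forall x, X x -> norm2 (gradf x) <= B) /\
  (exists B : R, forall x, X x -> norm2 (c x) <= B) /\
  (forall i, exists Li : R, forall x y, X x -> X y ->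
      norm2 (grad_ci J i x - grad_ci J i y) <= Li * norm2 (x - y)) /\
  (forall i, exists B : R, forall x, X x -> norm2 (grad_ci J i x) <= B) /\
  (* singular values of grad c(x)^T = J x bounded away from zero on X:
     smallest singular value of J x (m <= n) is min_{|v|=1} |(J x)^T v| *)
  (exists2 kappa : R, 0 < kappa & forall x (v : 'cV[R]_m), X x ->
      kappa * norm2 v <= norm2 ((J x)^T *m v)).

Definition assumption_A2 {n m} (Hk : 'M[R]_n) (Jk : 'M[R]_(m, n)) (kappaH zeta : R) :=
  [/\ Hk^T = Hk,
      forall v, norm2 (Hk *m v) <= kappaH * norm2 v &
      forall u, Jk *m u = 0 -> zeta * norm2 u ^+ 2 <= quad Hk u].

End SSSQP.

From mathcomp Require Import all_boot all_order all_algebra.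
From mathcomp Require Import reals constructive_ereal.
From mathcomp Require Import lra.
Import Order.TTheory GRing.Theory Num.Theory.
Local Open Scope ring_scope.

(* If c_k = 0, the step d_k lies in Null(J_k), where H_k is positive definite,
   and the KKT system gives g_k^T d_k = - d_k^T H_k d_k, so the denominator of
   the trial value vanishes.  Hence a positive denominator forces ||c_k||_1 > 0,
   the trial value is +oo or positive, and the update keeps every tau_k
   positive and below its trial value.  The bound on Delta l is
   "tau_k * denominator <= (1 - sigma) ||c_k||_1" rearranged. *)

Section SSSQPMeritParameter.
Variable R : realType.

Definition tau_trial_den {n} (g : 'cV[R]_n) (H : 'M[R]_n) (d : 'cV[R]_n) : R :=
  dotv g d + Num.max (quad H d) 0.

Lemma dotvC {n} (u v : 'cV[R]_n) : dotv u v = dotv v u.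
Proof. by apply: eq_bigr => i _; rewrite mulrC. Qed.

Lemma dotvNl {n} (u v : 'cV[R]_n) : dotv (- u) v = - dotv u v.
Proof. by rewrite /dotv -sumrN; apply: eq_bigr => i _; rewrite mxE mulNr. Qed.

Lemma dotvDl {n} (u w v : 'cV[R]_n) : dotv (u + w) v = dotv u v + dotv w v.
Proof. by rewrite /dotv -big_split; apply: eq_bigr => i _; rewrite mxE mulrDl. Qed.

Lemma dotv_mulmx {m n} (A : 'M[R]_(m, n)) (u : 'cV[R]_m) (v : 'cV[R]_n) :
  dotv (A^T *m u) v = dotv u (A *m v).
Proof.
have dotvE p (a b : 'cV[R]_p) : dotv a b = (a^T *m b) 0 0.
  by rewrite mxE; apply: eq_bigr => i _; rewrite mxE.
by rewrite !dotvE trmx_mul trmxK mulmxA.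
Qed.

Lemma norm1_ge0 {m} (v : 'cV[R]_m) : 0 <= norm1 v.
Proof. by rewrite sumr_ge0. Qed.

Lemma norm1_eq0 {m} (v : 'cV[R]_m) : (norm1 v == 0) = (v == 0).
Proof.
apply/idP/eqP => [|->]; last by rewrite /norm1 big1 // => i _; rewrite mxE normr0.
rewrite psumr_eq0 // => /allP v0; apply/matrixP => i j.
by rewrite (ord1 j) mxE; move: (v0 i (mem_index_enum i)); rewrite /= normr_eq0 => /eqP.
Qed.

Lemma quad_ge0_null {m n} (H : 'M[R]_n) (Jk : 'M[R]_(m, n)) kappaH zeta u :
  assumption_A2 H Jk kappaH zeta -> 0 <= zeta -> Jk *m u = 0 -> 0 <= quad H u.
Proof. by case=> _ _ Hnull zeta0 /Hnull; apply: le_trans; rewrite mulr_ge0 ?sqr_ge0. Qed.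

Lemma dotv_kkt_step {m n} {H : 'M[R]_n} {Jk : 'M[R]_(m, n)} {g d y ck} :
  H *m d + Jk^T *m y = - g -> Jk *m d = - ck ->
  dotv g d = dotv y ck - quad H d.
Proof.
move=> dual primal; rewrite -[g]opprK -dual dotvNl dotvDl dotv_mulmx primal.
by rewrite (dotvC y) dotvNl (dotvC (H *m d)) (dotvC ck) opprB.
Qed.

Lemma norm1_gt0_tau_trial_den {m n} (H : 'M[R]_n) (Jk : 'M[R]_(m, n)) g d y ck :
  (forall u, Jk *m u = 0 -> 0 <= quad H u) ->
  H *m d + Jk^T *m y = - g -> Jk *m d = - ck ->
  0 < tau_trial_den g H d -> 0 < norm1 ck.
Proof.
move=> Hnull dual primal den_gt0; rewrite lt0r norm1_ge0 norm1_eq0 andbT.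
apply: contraTN den_gt0 => /eqP ck0.
have Jd0 : Jk *m d = 0 by rewrite primal ck0 oppr0.
rewrite /tau_trial_den (dotv_kkt_step dual primal) ck0 (max_idPl (Hnull d Jd0)).
by rewrite /dotv big1 ?subrK ?ltxx // => i _; rewrite mxE mulr0.
Qed.

Lemma tau_trial_gt0 {m n} (sigma : R) (ck : 'cV[R]_m) g (H : 'M[R]_n) d :
  sigma < 1 -> (0 < tau_trial_den g H d -> 0 < norm1 ck) ->
  (0%:E < tau_trial sigma ck g H d)%E.
Proof.
move=> sigma1 ck_gt0; rewrite /tau_trial -/(tau_trial_den g H d).
case: ifPn => [_ | den_gt0]; first exact: ltry.
rewrite -ltNge in den_gt0.
by rewrite lte_fin divr_gt0 // mulr_gt0 ?subr_gt0 ?ck_gt0.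
Qed.

Lemma le_tau_trial {m n} (sigma t : R) (ck : 'cV[R]_m) g (H : 'M[R]_n) d :
  0 <= t -> sigma <= 1 -> (t%:E <= tau_trial sigma ck g H d)%E ->
  t * tau_trial_den g H d <= (1 - sigma) * norm1 ck.
Proof.
move=> t0 sigma1; rewrite /tau_trial -/(tau_trial_den g H d).
have rhs0 : 0 <= (1 - sigma) * norm1 ck by rewrite mulr_ge0 ?subr_ge0 ?norm1_ge0.
case: ifPn => [den_le0 _ | den_gt0].
  by apply: le_trans rhs0; rewrite mulr_ge0_le0.
rewrite -ltNge in den_gt0.
by rewrite lee_fin ler_pdivlMr.
Qed.

Lemma tau_next_le_trial (eps taup : R) (trial : \bar R) :
  (-oo < trial)%E -> ((tau_next eps taup trial)%:E <= trial)%E.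
Proof.
rewrite /tau_next; case: ifP => // _.
case: trial => [r _ | _ | //]; last exact: leey.
by rewrite lee_fin ge_min lexx orbT.
Qed.

Lemma tau_next_gt0 (eps taup : R) (trial : \bar R) :
  0 < taup -> eps < 1 -> (0%:E < trial)%E -> 0 < tau_next eps taup trial.
Proof.
move=> taup0 eps1; rewrite /tau_next; case: ifP => // taup_trial.
case: trial taup_trial => [r _ | | ] //=; last by rewrite leey.
by rewrite lte_fin lt_min mulr_gt0 ?subr_gt0.
Qed.

Lemma tau_next_neq (eps taup : R) (trial : \bar R) :
  tau_next eps taup trial != taup -> tau_next eps taup trial <= (1 - eps) * taup.
Proof. by rewrite /tau_next; case: ifP => [_ | _ _]; rewrite ?eqxx // ge_min lexx. Qed.

Lemma Delta_l_ge {m n} (c : 'cV[R]_n -> 'cV[R]_m) x (sigma t : R) g H d :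
  t * tau_trial_den g H d <= (1 - sigma) * norm1 (c x) ->
  t * Num.max (quad H d) 0 + sigma * norm1 (c x) <= Delta_l c x t g d.
Proof. by rewrite /tau_trial_den /Delta_l; lra. Qed.

End SSSQPMeritParameter.

Theorem lemma3p11 (R : realType) (n m : nat)
  (f : 'cV[R]_n -> R) (gradf : 'cV[R]_n -> 'cV[R]_n)
  (c : 'cV[R]_n -> 'cV[R]_m) (J : 'cV[R]_n -> 'M[R]_(m, n))
  (X : 'cV[R]_n -> Prop) (L kappaH zeta : R)
  (tau_m1 alpha_max eps_f gamma theta sigma eps_tau : R)
  (x : nat -> 'cV[R]_n) (alpha : nat -> R) (gbar : nat -> 'cV[R]_n)
  (H : nat -> 'M[R]_n) (d : nat -> 'cV[R]_n) (y : nat -> 'cV[R]_m)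
  (tau : nat -> R) (fbar0 fbarp : nat -> R) :
  let tau_prev k := if k is k'.+1 then tau k' else tau_m1 in
  (m <= n)%N ->
  C1_scalar f gradf -> C1_vector c J ->
  (* (A1) *)
  (forall k, X (x k) /\ X (x k + alpha k *: d k)) ->
  assumption_A1 X f gradf c J L ->
  (* (A2) *)
  0 < kappaH -> 0 < zeta ->
  (forall k, assumption_A2 (H k) (J (x k)) kappaH zeta) ->
  (* inputs *)
  0 < tau_m1 -> 0 < alpha_max -> alpha_max <= 1 ->
  0 < alpha 0 -> alpha 0 <= alpha_max -> 0 <= eps_f ->
  0 < gamma < 1 -> 0 < theta < 1 -> 0 < sigma < 1 -> 0 < eps_tau < 1 ->
  (* step computation: the linear system *)
  (forall k, H k *m d k + (J (x k))^T *m y k = - gbar k /\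
             J (x k) *m d k = - c (x k)) ->
  (* merit parameter update *)
  (forall k, tau k = tau_next eps_tau (tau_prev k)
                       (tau_trial sigma (c (x k)) (gbar k) (H k) (d k))) ->
  (* acceptance test and step size update; fbar0 k = fbar(x_k; xi_k^0),
     fbarp k = fbar(x_k^+; xi_k^+) *)
  (forall k,
     let xp := x k + alpha k *: d k in
     if tau k * fbarp k + norm1 (c xp) <=
        tau k * fbar0 k + norm1 (c (x k))
        - alpha k * theta * Delta_l c (x k) (tau k) (gbar k) (d k)
        + 2 * tau k * eps_f
     then x k.+1 = xp /\ alpha k.+1 = Num.min alpha_max (alpha k / gamma)
     else x k.+1 = x k /\ alpha k.+1 = gamma * alpha k) ->
  forall k,
    Delta_l c (x k) (tau k) (gbar k) (d k) >=
      tau k * Num.max (quad (H k) (d k)) 0 + sigma * norm1 (c (x k)) /\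
    (tau k != tau_prev k -> 0 < tau k /\ tau k <= (1 - eps_tau) * tau_prev k).
Proof.
move=> tau_prev _ _ _ _ _ _ zeta0 A2 tau_m1_gt0 _ _ _ _ _ _ _
  /andP[_ sigma1] /andP[_ eps1] kkt tauE _.
have trial_gt0 k : (0%:E < tau_trial sigma (c (x k)) (gbar k) (H k) (d k))%E.
  apply: tau_trial_gt0 sigma1 _.
  have [dual primal] := kkt k.
  apply: norm1_gt0_tau_trial_den dual primal => u.
  exact: quad_ge0_null (A2 k) (ltW zeta0).
have tau_gt0 k : 0 < tau k.
  by elim: k => [|k IH]; rewrite tauE; apply: tau_next_gt0.
move=> k; split=> [|tau_neq].
- apply/Delta_l_ge/le_tau_trial; [exact: ltW | exact: ltW | ].
  rewrite tauE; apply: tau_next_le_trial; exact: lt_trans (ltNyr 0) (trial_gt0 k).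
- split; first exact: tau_gt0.
  by move: tau_neq; rewrite tauE; apply: tau_next_neq.
Qed.
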